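(* Let $T:V\to\mathfrak g$ be an $\mathcal O$-operator on a Lie algebra $\mathfrak g$ with respect to a representation $(V;\rho)$. If $\mathcal Z^1(V,\mathfrak g)=d_{\bar\rho}(\mathrm{Nij}(T))$, then $T$ is rigid.
   Context: An $\mathcal O$-operator: linear $T:V\to\mathfrak g$ with $[Tu,Tv]=T(\rho(Tu)(v)-\rho(Tv)(u))$. $\bar\rho(u)(y)=[Tu,y]+T\rho(y)(u)$; $d_{\bar\rho}y(u)=[Tu,y]+T\rho(y)(u)$ for $y\in\mathfrak g$; $\mathcal Z^1(V,\mathfrak g)$ is the set of linear $f:V\to\mathfrak g$ with $[Tu,f(v)]-[Tv,f(u)]-T(\rho(f(u))(v)-\rho(f(v))(u))-f(\rho(Tu)(v)-\rho(Tv)(u))=0$ for all $u,v$. $\mathrm{Nij}(T)$ is the set of $x\in\mathfrak g$ with $[[x,y],[x,z]]=0$ and $\rho([x,y])\rho(x)=0$ for all $y,z\in\mathfrak g$, and $[x,[Tu,x]+T\rho(x)(u)]=0$ for all $u\in V$. A one-parameter formal deformation of $T$: $T_t=\sum_{i\ge0}\tau_it^i$, $\tau_i\in\mathrm{Hom}(V,\mathfrak g)$, $\tau_0=T$, extended $\mathbb K[[t]]$-linearly, with $[T_t(u),T_t(v)]=T_t(\rho(T_t(u))(v)-\rho(T_t(v))(u))$ in $\mathfrak g[[t]]$. Two formal deformations $\overline T_t,T_t$ are equivalent if there exist $x\in\mathfrak g$, $\phi_i\in\mathfrak{gl}(\mathfrak g)$, $\varphi_i\in\mathfrak{gl}(V)$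 ($i\ge2$) with $\phi_t=\mathrm{Id}_{\mathfrak g}+t\,\mathrm{ad}_x+\sum_{i\ge2}\phi_it^i$, $\varphi_t=\mathrm{Id}_V+t\rho(x)+\sum_{i\ge2}\varphi_it^i$ satisfying $[\phi_t(y),\phi_t(z)]=\phi_t[y,z]$, $T_t\circ\varphi_t=\phi_t\circ\overline T_t$, and $\varphi_t\rho(y)u=\rho(\phi_t(y))\varphi_t(u)$. A formal deformation is trivial if it is equivalent to $T$ (regarded as a deformation of itself), and $T$ is rigid if every one-parameter formal deformation of $T$ is trivial. *)

(* Lie algebras, representations, O-operators and their
   one-parameter formal deformations, with power series over K[[t]]
   encoded coefficientwise (sequences nat -> ...). *)
From HB Require Import structures.
From mathcomp Require Import all_boot all_algebra.
Set Implicit Arguments. Unset Strict Implicit. Unset Printing Implicit Defensive.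
Import GRing.Theory.
Local Open Scope ring_scope.

Definition is_lin (K : fieldType) (U W : lmodType K) (f : U -> W) : Prop :=
  forall (a : K) (u v : U), f (a *: u + v) = a *: f u + f v.

Definition is_LieAlg (K : fieldType) (g : lmodType K) (br : g -> g -> g) : Prop :=
  [/\ forall z, is_lin (fun x => br x z),
      forall x, is_lin (br x),
      forall x, br x x = 0
    & forall x y z, br x (br y z) + br y (br z x) + br z (br x y) = 0].

Definition is_rep (K : fieldType) (g V : lmodType K) (br : g -> g -> g)
    (rho : g -> V -> V) : Prop :=
  [/\ forall (a : K) x y v, rho (a *: x + y) v = a *: rho x v + rho y v,
      forall x, is_lin (rho x)
    & forall x y v, rho (br x y) v = rho x (rho y v) - rho y (rho x v)].

Definition is_Ooperator (K : fieldType) (g V : lmodType K) (br : g -> g -> g)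
    (rho : g -> V -> V) (T : V -> g) : Prop :=
  is_lin T /\ forall u v, br (T u) (T v) = T (rho (T u) v - rho (T v) u).

Definition dbar (K : fieldType) (g V : lmodType K) (br : g -> g -> g)
    (rho : g -> V -> V) (T : V -> g) (y : g) : V -> g :=
  fun u => br (T u) y + T (rho y u).

Definition Z1 (K : fieldType) (g V : lmodType K) (br : g -> g -> g)
    (rho : g -> V -> V) (T : V -> g) (f : V -> g) : Prop :=
  is_lin f /\
  forall u v, br (T u) (f v) - br (T v) (f u) - T (rho (f u) v - rho (f v) u)
              - f (rho (T u) v - rho (T v) u) = 0.

Definition Nij (K : fieldType) (g V : lmodType K) (br : g -> g -> g)
    (rho : g -> V -> V) (T : V -> g) (x : g) : Prop :=
  [/\ forall y z, br (br x y) (br x z) = 0,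
      forall y v, rho (br x y) (rho x v) = 0
    & forall u, br x (br (T u) x + T (rho x u)) = 0].

(* T_t = sum_i tau i t^i is a one-parameter formal deformation of T;
   the identity in g[[t]] is written coefficientwise (coefficient of t^n). *)
Definition is_deformation (K : fieldType) (g V : lmodType K) (br : g -> g -> g)
    (rho : g -> V -> V) (T : V -> g) (tau : nat -> V -> g) : Prop :=
  [/\ forall u, tau 0%N u = T u,
      forall i, is_lin (tau i)
    & forall (n : nat) u v,
        \sum_(i < n.+1) br (tau i u) (tau (n - i)%N v)
        = \sum_(i < n.+1) tau i (rho (tau (n - i)%N u) v - rho (tau (n - i)%N v) u)].

(* Equivalence of deformations taubar_t and tau_t:
   phi_t = Id + t ad_x + sum_{i>=2} phi_i t^i,
   vphi_t = Id + t rho(x) + sum_{i>=2} vphi_i t^i, with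
   [phi_t y, phi_t z] = phi_t [y,z],  T_t o vphi_t = phi_t o Tbar_t,
   vphi_t (rho(y) u) = rho(phi_t y) (vphi_t u), all coefficientwise. *)
Definition deform_equiv (K : fieldType) (g V : lmodType K) (br : g -> g -> g)
    (rho : g -> V -> V) (taubar tau : nat -> V -> g) : Prop :=
  exists (x : g) (phi : nat -> g -> g) (vphi : nat -> V -> V),
    [/\ (forall y, phi 0%N y = y) /\ (forall y, phi 1%N y = br x y),
        ((forall v, vphi 0%N v = v) /\ (forall v, vphi 1%N v = rho x v))
          /\ ((forall i, is_lin (phi i)) /\ (forall i, is_lin (vphi i))),
        forall (n : nat) y z,
          \sum_(i < n.+1) br (phi i y) (phi (n - i)%N z) = phi n (br y z),
        forall (n : nat) u,
          \sum_(i < n.+1) tau i (vphi (n - i)%N u)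
          = \sum_(i < n.+1) phi i (taubar (n - i)%N u)
      & forall (n : nat) y u,
          vphi n (rho y u) = \sum_(i < n.+1) rho (phi i y) (vphi (n - i)%N u)].

Definition const_deformation (K : fieldType) (g V : lmodType K) (T : V -> g)
    : nat -> V -> g :=
  fun i => if i is 0%N then T else fun _ => 0.

Definition trivial_deformation (K : fieldType) (g V : lmodType K)
    (br : g -> g -> g) (rho : g -> V -> V) (T : V -> g) (tau : nat -> V -> g) : Prop :=
  deform_equiv br rho tau (const_deformation T).

Definition rigid (K : fieldType) (g V : lmodType K) (br : g -> g -> g)
    (rho : g -> V -> V) (T : V -> g) : Prop :=
  forall tau : nat -> V -> g,
    is_deformation br rho T tau -> trivial_deformation br rho T tau.

From mathcomp Require Import all_boot all_algebra.
From mathcomp Require Import zify.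
From Stdlib Require Import Lia FunctionalExtensionality ClassicalEpsilon.
Set Implicit Arguments. Unset Strict Implicit. Unset Printing Implicit Defensive.
Import GRing.Theory.
Local Open Scope ring_scope.

(* Let T_t = T + sum_(i >= k) tau_i t^i be a deformation.  The t^k-coefficient of the
   deformation equation says that tau_k is a 1-cocycle, so tau_k = d_rhobar y with
   y in Nij(T).  The first two Nijenhuis conditions make
   Id + t^k ad_y a Lie algebra endomorphism of g[[t]] compatible, through
   Id + t^k rho(y), with the representation; conjugating T_t by this pair gives an
   equivalent deformation in which tau_k is replaced by tau_k - d_rhobar y = 0 and the
   lower coefficients are unchanged.  Repeating for k = 1, 2, ... modifies the
   accumulated transformations only in degrees >= k at step k, so they converge
   t-adically to an equivalence between T_t and T. *)

Lemma morph_add0 (Z Z' : zmodType) (f : Z -> Z') : {morph f : x y / x + y} -> f 0 = 0.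
Proof. by move=> fD; apply: (addrI (f 0)); rewrite -fD !addr0. Qed.

Section Convolution.
Variable Z : zmodType.
Implicit Types (f h : nat -> nat -> Z) (X Y : nat -> Z).

(* Series over K[[t]] are coefficient sequences: conv gives the coefficients of Cauchy
   products, tshift k multiplies by t^k, and gauge k f below applies Id + t^k f. *)
Definition conv f n : Z := \sum_(i < n.+1) f i (n - i)%N.

Definition tshift k X n : Z := if (k <= n)%N then X (n - k)%N else 0.

Lemma convE f n : conv f n = \sum_(0 <= i < n.+1) f i (n - i)%N.
Proof. by rewrite /conv big_mkord. Qed.

Lemma convC f n : conv f n = conv (fun i j => f j i) n.
Proof.
rewrite !convE big_nat_rev /=; apply: eq_big_nat => i /andP[_ hi].
by rewrite add0n subSS subKn.
Qed.

Lemma eq_conv f h n : (forall i j, (i <= n)%N -> (j <= n)%N -> f i j = h i j) ->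
  conv f n = conv h n.
Proof. by move=> fh; apply: eq_bigr => i _; rewrite fh // ?leq_subr // -ltnS. Qed.

Lemma convD f h n : conv (fun i j => f i j + h i j) n = conv f n + conv h n.
Proof. exact: big_split. Qed.

Lemma convN f n : conv (fun i j => - f i j) n = - conv f n.
Proof. exact: sumrN. Qed.

Lemma convB f h n : conv (fun i j => f i j - h i j) n = conv f n - conv h n.
Proof. by rewrite convD convN. Qed.

Lemma conv0 n : conv (fun _ _ => 0) n = 0.
Proof. exact: big1. Qed.

Lemma conv_unitl X n : conv (fun i j => if i == 0%N then X j else 0) n = X n.
Proof. by rewrite /conv big_ord_recl subn0 big1 ?addr0. Qed.

Lemma conv_unitr X n : conv (fun i j => if j == 0%N then X i else 0) n = X n.
Proof. by rewrite convC conv_unitl. Qed.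

Lemma conv_ends f n : (0 < n)%N -> (forall i j, (0 < i < n)%N -> f i j = 0) ->
  conv f n = f 0%N n + f n 0%N.
Proof.
case: n => // n _ mid0; rewrite /conv big_ord_recl big_ord_recr /= subn0 subnn.
rewrite big1 ?add0r // => i _; apply: mid0.
by rewrite /bump /=; have := ltn_ord i; lia.
Qed.

Lemma conv_tshiftl k h n :
  conv (fun i j => tshift k (fun l => h l j) i) n = tshift k (conv h) n.
Proof.
rewrite /tshift convE; case: leqP => [kn|nk].
  rewrite (big_cat_nat (leq0n k)) //= ?leqW // big1_seq ?add0r; last first.
    by move=> i /andP[_]; rewrite mem_index_iota => /andP[_]; rewrite ltnNge => /negbTE ->.
  rewrite -{1}[k]add0n big_addn convE subSn //.
  by apply: eq_big_nat => i _; rewrite leq_addl addnK subnDA subnAC.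
rewrite big_nat big1 // => i /andP[_ hi].
by rewrite leqNgt (leq_ltn_trans _ nk) // -ltnS.
Qed.

Lemma conv_tshiftr k h n :
  conv (fun i j => tshift k (h i) j) n = tshift k (conv h) n.
Proof.
rewrite convC (conv_tshiftl k (fun i j => h j i)) /tshift; case: leqP => // _.
by rewrite -convC.
Qed.

Lemma eq_tshift k X Y n : (forall m, X m = Y m) -> tshift k X n = tshift k Y n.
Proof. by move=> XY; rewrite /tshift XY. Qed.

Lemma tshiftD k X Y n : tshift k (fun m => X m + Y m) n = tshift k X n + tshift k Y n.
Proof. by rewrite /tshift; case: ifP; rewrite ?addr0. Qed.

Lemma tshiftN k X n : tshift k (fun m => - X m) n = - tshift k X n.
Proof. by rewrite /tshift; case: ifP; rewrite ?oppr0. Qed.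

Lemma tshiftB k X Y n : tshift k (fun m => X m - Y m) n = tshift k X n - tshift k Y n.
Proof. by rewrite tshiftD tshiftN. Qed.

Lemma tshift0 k n : tshift k (fun _ => 0) n = 0.
Proof. by rewrite /tshift if_same. Qed.

Lemma tshift_small k X n : (n < k)%N -> tshift k X n = 0.
Proof. by rewrite /tshift ltnNge => /negbTE ->. Qed.

Lemma tshift_eq0 k X n : (0 < k)%N -> (forall m, (m < n)%N -> X m = 0) -> tshift k X n = 0.
Proof.
move=> k_gt0 X0; rewrite /tshift; case: ifP => // kn; apply: X0.
by rewrite ltn_subrL k_gt0 (leq_trans k_gt0 kn).
Qed.

End Convolution.

Definition cseries (Z : zmodType) (z : Z) m : Z := if m == 0%N then z else 0.

Lemma conv_morph (Y Z : zmodType) (f : Y -> Z) : {morph f : x y / x + y} ->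
  forall h n, f (conv h n) = conv (fun i j => f (h i j)) n.
Proof. by move=> fD h n; apply: (big_morph f fD (morph_add0 fD)). Qed.

Lemma conv_tshiftDr (Y Z : zmodType) (F : nat -> Y -> Z) k (B B' : nat -> Y) n :
  (forall i, {morph F i : x y / x + y}) ->
  conv (fun i j => F i (B j + tshift k B' j)) n
  = conv (fun i j => F i (B j)) n + tshift k (conv (fun i j => F i (B' j))) n.
Proof.
move=> FD; rewrite -conv_tshiftr -convD; apply: eq_conv => i j _ _.
by rewrite FD /tshift; case: ifP; rewrite ?(morph_add0 (FD i)).
Qed.

Lemma conv_tshiftDl (X Z : zmodType) (F : nat -> X -> Z) k (A A' : nat -> X) n :
  (forall j, {morph F j : x y / x + y}) ->
  conv (fun i j => F j (A i + tshift k A' i)) n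
  = conv (fun i j => F j (A i)) n + tshift k (conv (fun i j => F j (A' i))) n.
Proof.
move=> FD; rewrite convC (conv_tshiftDr (F := F)) // -convC.
by congr (_ + _); apply: eq_tshift => m; rewrite -convC.
Qed.

Definition gauge (Z : zmodType) k (f : Z -> Z) (X : nat -> Z) n : Z :=
  X n + tshift k (fun m => f (X m)) n.

Lemma gauge_small (Z : zmodType) k (f : Z -> Z) X n : (n < k)%N -> gauge k f X n = X n.
Proof. by move=> nk; rewrite /gauge tshift_small ?addr0. Qed.

Lemma eq_gauge (Z : zmodType) k (f : Z -> Z) X Y n : (forall m, X m = Y m) ->
  gauge k f X n = gauge k f Y n.
Proof. by move=> XY; rewrite /gauge XY (eq_tshift _ _ (fun m => congr1 f (XY m))). Qed.

Lemma gaugeB (Z : zmodType) k (f : Z -> Z) X Y n : {morph f : x y / x - y} ->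
  gauge k f (fun m => X m - Y m) n = gauge k f X n - gauge k f Y n.
Proof.
move=> fB; rewrite /gauge (@eq_tshift _ k _ (fun m => f (X m) - f (Y m))) //.
by rewrite tshiftB opprD addrACA.
Qed.

Lemma gauge0 (Z : zmodType) k (f : Z -> Z) n : f 0 = 0 -> gauge k f (fun _ => 0) n = 0.
Proof. by move=> f0; rewrite /gauge /tshift f0 if_same addr0. Qed.

Lemma conv_gaugel (Z : zmodType) k (f : Z -> Z) : {morph f : x y / x + y} ->
  forall (h : nat -> nat -> Z) n,
  conv (fun i j => gauge k f (fun m => h m j) i) n = gauge k f (conv h) n.
Proof.
move=> fD h n; rewrite /gauge convD conv_tshiftl; congr (_ + _).
by apply: eq_tshift => m; rewrite (conv_morph fD).
Qed.

Lemma conv_gauge (X Y Z : zmodType) (F : X -> Y -> Z) (f : X -> X) (h : Y -> Y)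
    (e : Z -> Z) k (A : nat -> X) (B : nat -> Y) n :
  (forall y, {morph F^~ y : a b / a + b}) -> (forall x, {morph F x : a b / a + b}) ->
  {morph e : a b / a + b} ->
  (forall a b, e (F a b) = F (f a) b + F a (h b)) -> (forall a b, F (f a) (h b) = 0) ->
  conv (fun i j => F (gauge k f A i) (gauge k h B j)) n
  = gauge k e (conv (fun i j => F (A i) (B j))) n.
Proof.
move=> FDl FDr eD eF Ffh.
have fA_gauge m : conv (fun i j => F (f (A i)) (gauge k h B j)) m
                  = conv (fun i j => F (f (A i)) (B j)) m.
  rewrite /gauge (conv_tshiftDr (F := fun i y => F (f (A i)) y)) //.
  rewrite (@eq_tshift _ _ _ (fun _ => 0)) ?tshift0 ?addr0 // => l.
  by rewrite (@eq_conv _ _ (fun _ _ => 0)) ?conv0.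
rewrite {1}/gauge (conv_tshiftDl (F := fun j x => F x (gauge k h B j))) //.
rewrite (eq_tshift _ _ fA_gauge) /gauge.
rewrite (conv_tshiftDr (F := fun i y => F (A i) y)) //.
rewrite -addrA -tshiftD; congr (_ + _); apply: eq_tshift => m.
by rewrite (conv_morph eD) -convD; apply: eq_conv => i j _ _; rewrite eF addrC.
Qed.

Section LinearMaps.
Variables (K : fieldType) (U W X : lmodType K).

Lemma linD (f : U -> W) : is_lin f -> {morph f : u v / u + v}.
Proof. by move=> fL u v; rewrite -{1}[u]scale1r fL scale1r. Qed.

Lemma lin0 (f : U -> W) : is_lin f -> f 0 = 0.
Proof. by move=> /linD /morph_add0. Qed.

Lemma linN (f : U -> W) : is_lin f -> {morph f : u / - u}.
Proof. by move=> fL u; apply/eqP; rewrite -subr_eq0 opprK -linD // addNr lin0. Qed.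

Lemma linB (f : U -> W) : is_lin f -> {morph f : u v / u - v}.
Proof. by move=> fL u v; rewrite linD // linN. Qed.

Lemma lin_add (f h : U -> W) : is_lin f -> is_lin h -> is_lin (fun u => f u + h u).
Proof. by move=> fL hL a u v; rewrite fL hL scalerDr addrACA. Qed.

Lemma lin_sub (f h : U -> W) : is_lin f -> is_lin h -> is_lin (fun u => f u - h u).
Proof. by move=> fL hL a u v; rewrite fL hL scalerBr opprD addrACA. Qed.

Lemma lin_comp (f : W -> X) (h : U -> W) : is_lin f -> is_lin h -> is_lin (fun u => f (h u)).
Proof. by move=> fL hL a u v; rewrite hL fL. Qed.

Lemma lin_tshift k (F : nat -> U -> W) m :
  (forall l, is_lin (F l)) -> is_lin (fun u => tshift k (fun l => F l u) m).
Proof. by rewrite /tshift; case: leqP => // _ _ a u v; rewrite scaler0 addr0. Qed.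

End LinearMaps.

Lemma lin_gauge (K : fieldType) (U W : lmodType K) k (f : W -> W) (F : nat -> U -> W) m :
  is_lin f -> (forall l, is_lin (F l)) -> is_lin (fun u => gauge k f (fun l => F l u) m).
Proof.
move=> fL FL; apply: lin_add => //.
by apply: (@lin_tshift _ _ _ k (fun l u => f (F l u))) => l; apply: lin_comp.
Qed.

Section StepRecursion.
Variables (X : Type) (k : nat) (B0 : nat -> X) (C : nat -> X -> X).

Fixpoint step_rec_fuel fuel m : X :=
  if fuel is fuel'.+1 then
    (if (k <= m)%N then C m (step_rec_fuel fuel' (m - k)%N) else B0 m)
  else B0 m.

(* m.+1 units of fuel suffice because each recursive call lowers the index by k > 0. *)
Definition step_rec m : X := step_rec_fuel m.+1 m.

Hypothesis k_gt0 : (0 < k)%N.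

Lemma step_rec_fuel_enough f1 f2 m : (m < f1)%N -> (m < f2)%N ->
  step_rec_fuel f1 m = step_rec_fuel f2 m.
Proof.
elim: f1 f2 m => [|f1 IH] [|f2] m //= mf1 mf2.
by case: ifP => // km; congr (C m _); apply: IH; lia.
Qed.

Lemma step_recE m : step_rec m = if (k <= m)%N then C m (step_rec (m - k)%N) else B0 m.
Proof.
rewrite {1}/step_rec /=; case: ifP => // km; congr (C m _).
by apply: step_rec_fuel_enough; lia.
Qed.

End StepRecursion.

Section LieRepresentation.
Variables (K : fieldType) (g V : lmodType K) (br : g -> g -> g) (rho : g -> V -> V).
Hypothesis Lie_br : is_LieAlg br.
Hypothesis rep_rho : is_rep br rho.

Lemma brDl z : {morph br^~ z : x y / x + y}.
Proof. by case: Lie_br => brL _ _ _; apply: linD. Qed.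

Lemma brDr x : {morph br x : y z / y + z}.
Proof. by case: Lie_br => _ brR _ _; apply: linD. Qed.

Lemma brBr x : {morph br x : y z / y - z}.
Proof. by case: Lie_br => _ brR _ _; apply: linB. Qed.

Lemma brNr x : {morph br x : y / - y}.
Proof. by case: Lie_br => _ brR _ _; apply: linN. Qed.

Lemma br0l z : br 0 z = 0. Proof. exact: morph_add0 (brDl z). Qed.
Lemma br0r x : br x 0 = 0. Proof. exact: morph_add0 (brDr x). Qed.

Lemma br_anti x y : br x y = - br y x.
Proof.
case: Lie_br => _ _ brxx _; apply/eqP; rewrite -addr_eq0.
by have := brxx (x + y); rewrite brDl !brDr !brxx add0r addr0 => ->.
Qed.

Lemma br_jacobi x y z : br x (br y z) = br (br x y) z + br y (br x z).
Proof.
case: Lie_br => _ _ _ jacobi; have := jacobi x y z.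
rewrite (br_anti z x) brNr (br_anti z (br x y)) -addrA -opprD => /eqP.
by rewrite subr_eq0 => /eqP ->; rewrite addrC.
Qed.

Lemma rhoDl v : {morph rho^~ v : x y / x + y}.
Proof. by case: rep_rho => rhoL _ _ x y; rewrite -{1}[x]scale1r rhoL scale1r. Qed.

Lemma rhoDr x : {morph rho x : v w / v + w}.
Proof. by case: rep_rho => _ rhoR _; apply: linD. Qed.

Lemma rhoBr x : {morph rho x : v w / v - w}.
Proof. by case: rep_rho => _ rhoR _; apply: linB. Qed.

Lemma rho0l v : rho 0 v = 0. Proof. exact: morph_add0 (rhoDl v). Qed.
Lemma rho0r x : rho x 0 = 0. Proof. exact: morph_add0 (rhoDr x). Qed.

Lemma rho_br x y v : rho (br x y) v = rho x (rho y v) - rho y (rho x v).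
Proof. by case: rep_rho. Qed.

Lemma conv_br_gauge y k (A B : nat -> g) n :
  (forall a b, br (br y a) (br y b) = 0) ->
  conv (fun i j => br (gauge k (br y) A i) (gauge k (br y) B j)) n
  = gauge k (br y) (conv (fun i j => br (A i) (B j))) n.
Proof.
move=> Ny; apply: conv_gauge => //; [exact: brDl|exact: brDr|exact: brDr|exact: br_jacobi].
Qed.

Lemma conv_rho_gauge y k (A : nat -> g) (W : nat -> V) n :
  (forall a v, rho (br y a) (rho y v) = 0) ->
  conv (fun i j => rho (gauge k (br y) A i) (gauge k (rho y) W j)) n
  = gauge k (rho y) (conv (fun i j => rho (A i) (W j))) n.
Proof.
move=> Ny; apply: conv_gauge => //; [exact: rhoDl|exact: rhoDr|exact: rhoDr|] => a v.
by rewrite rho_br subrK.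
Qed.

Definition sapp (S : nat -> V -> g) (U : nat -> V) n : g := conv (fun i j => S i (U j)) n.

Definition mc_defect (S : nat -> V -> g) (U W : nat -> V) n : g :=
  conv (fun i j => br (sapp S U i) (sapp S W j)) n
  - sapp S (fun m => conv (fun i j => rho (sapp S U i) (W j)) m
                     - conv (fun i j => rho (sapp S W i) (U j)) m) n.

Section MapSeries.
Variable S : nat -> V -> g.
Hypothesis S_lin : forall i, is_lin (S i).

Lemma sappN U n : sapp S (fun m => - U m) n = - sapp S U n.
Proof. by rewrite -convN; apply: eq_conv => i j _ _; rewrite linN. Qed.

Lemma sapp_tshiftD k U U' :
  sapp S (fun m => U m + tshift k U' m) = fun m => sapp S U m + tshift k (sapp S U') m.
Proof.
by apply: functional_extensionality => m; apply: conv_tshiftDr => i; apply: linD.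
Qed.

Lemma sapp_cseries u n : sapp S (cseries u) n = S n u.
Proof.
rewrite /sapp -(conv_unitr (fun i => S i u)); apply: eq_conv => i j _ _.
by rewrite /cseries; case: eqP => // _; apply: lin0.
Qed.

Lemma mc_defectC U W n : mc_defect S U W n = - mc_defect S W U n.
Proof.
rewrite /mc_defect opprB [RHS]addrC; congr (_ + _).
  by rewrite convC -convN; apply: eq_conv => i j _ _; rewrite br_anti.
by rewrite -sappN; congr (sapp S _ n); apply: functional_extensionality => m; rewrite opprB.
Qed.

Lemma mc_defect_tshiftDl k U U' W n :
  mc_defect S (fun m => U m + tshift k U' m) W n
  = mc_defect S U W n + tshift k (mc_defect S U' W) n.
Proof.
rewrite /mc_defect sapp_tshiftD (conv_tshiftDl (F := fun j x => br x (sapp S W j))); last first.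
  by move=> j; apply: brDl.
set inner := fun U W m => conv (fun i j => rho (sapp S U i) (W j)) m
                         - conv (fun i j => rho (sapp S W i) (U j)) m.
have -> : (fun m => conv (fun i j => rho (sapp S U i + tshift k (sapp S U') i) (W j)) m
         - conv (fun i j => rho (sapp S W i) (U j + tshift k U' j)) m)
         = fun m => inner U W m + tshift k (inner U' W) m.
  apply: functional_extensionality => m.
  rewrite (conv_tshiftDl (F := fun j x => rho x (W j))); last by move=> j; apply: rhoDl.
  rewrite (conv_tshiftDr (F := fun i v => rho (sapp S W i) v)); last by move=> i; apply: rhoDr.
  by rewrite /inner tshiftB opprD addrACA.
by rewrite sapp_tshiftD tshiftB opprD addrACA.
Qed.

Lemma mc_defect_tshiftDr k U W W' n :
  mc_defect S U (fun m => W m + tshift k W' m) n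
  = mc_defect S U W n + tshift k (mc_defect S U W') n.
Proof.
rewrite mc_defectC mc_defect_tshiftDl opprD mc_defectC opprK -tshiftN.
by congr (_ + _); apply: eq_tshift => m; rewrite mc_defectC opprK.
Qed.

Lemma mc_defect_cseries u v n :
  mc_defect S (cseries u) (cseries v) n
  = conv (fun i j => br (S i u) (S j v)) n
    - conv (fun i j => S i (rho (S j u) v - rho (S j v) u)) n.
Proof.
have rho_cseries (w : V) (A : nat -> g) m :
    conv (fun i j => rho (A i) (cseries w j)) m = rho (A m) w.
  rewrite -(conv_unitr (fun i => rho (A i) w)); apply: eq_conv => i j _ _.
  by rewrite /cseries; case: eqP => // _; rewrite rho0r.
rewrite /mc_defect; congr (_ - _).
  by apply: eq_conv => i j _ _; rewrite !sapp_cseries.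
by apply: eq_conv => i j _ _; rewrite !rho_cseries !sapp_cseries.
Qed.

Lemma deformation_mc_defect :
  (forall n u v, mc_defect S (cseries u) (cseries v) n = 0) <->
  (forall n u v, \sum_(i < n.+1) br (S i u) (S (n - i)%N v)
     = \sum_(i < n.+1) S i (rho (S (n - i)%N u) v - rho (S (n - i)%N v) u)).
Proof.
split=> mc0 n u v; have := mc_defect_cseries u v n; rewrite /conv.
  by rewrite mc0 => /esym/eqP; rewrite subr_eq0 => /eqP.
by rewrite mc0 subrr.
Qed.

End MapSeries.

Lemma gauge_cseries k y (w : V) :
  gauge k (rho y) (cseries w) = fun m => cseries w m + tshift k (cseries (rho y w)) m.
Proof.
apply: functional_extensionality => m; rewrite /gauge; congr (_ + _).
by apply: eq_tshift => l; rewrite /cseries; case: eqP => // _; rewrite rho0r.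
Qed.

(* S'_t o (Id + t^k rho(y)) = (Id + t^k ad_y) o S_t. *)
Definition gauge_conj y k (S S' : nat -> V -> g) :=
  forall m w, S' m w + tshift k (fun l => S' l (rho y w)) m = gauge k (br y) (fun l => S l w) m.

Section GaugeConjugation.
Variables (y : g) (k : nat) (S S' : nat -> V -> g).
Hypothesis k_gt0 : (0 < k)%N.
Hypothesis Ny_br : forall a b, br (br y a) (br y b) = 0.
Hypothesis Ny_rho : forall a v, rho (br y a) (rho y v) = 0.
Hypothesis S'_lin : forall i, is_lin (S' i).
Hypothesis S'_conj : gauge_conj y k S S'.

Lemma sapp_gauge_conj U :
  sapp S' (gauge k (rho y) U) = gauge k (br y) (sapp S U).
Proof.
apply: functional_extensionality => n.
rewrite /sapp {1}/gauge (conv_tshiftDr (F := S')); last by move=> i; apply: linD.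
rewrite (@eq_conv _ _ (fun i j => gauge k (br y) (fun l => S l (U j)) i
                                  - tshift k (fun l => S' l (rho y (U j))) i)); last first.
  by move=> i j _ _; rewrite -(S'_conj i (U j)) addrK.
by rewrite convB (conv_gaugel _ (brDr y)) conv_tshiftl subrK.
Qed.

Lemma mc_defect_gauge_conj U W n :
  mc_defect S' (gauge k (rho y) U) (gauge k (rho y) W) n = gauge k (br y) (mc_defect S U W) n.
Proof.
rewrite /mc_defect !sapp_gauge_conj conv_br_gauge //.
rewrite (_ : (fun m => _ - _) = gauge k (rho y) (fun m =>
    conv (fun i j => rho (sapp S U i) (W j)) m - conv (fun i j => rho (sapp S W i) (U j)) m)).
  by rewrite sapp_gauge_conj gaugeB //; apply: brBr.
apply: functional_extensionality => m.
by rewrite !conv_rho_gauge // gaugeB //; apply: rhoBr.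
Qed.

Lemma gauge_conj_mc_defect0 :
  (forall n u v, mc_defect S (cseries u) (cseries v) n = 0) ->
  forall n u v, mc_defect S' (cseries u) (cseries v) n = 0.
Proof.
move=> mcS; elim/ltn_ind => n IH u v.
(* On constant series the gauge identity bounds the degree-n defect of S' by its
   defects in degrees < n. *)
have := mc_defect_gauge_conj (cseries u) (cseries v) n.
have -> : mc_defect S (cseries u) (cseries v) = fun _ => 0.
  by apply: functional_extensionality => m; apply: mcS.
rewrite gauge0 ?br0r //.
rewrite !gauge_cseries mc_defect_tshiftDl // !mc_defect_tshiftDr //.
rewrite [X in _ + X + _]tshift_eq0 // => [|m mn]; last exact: IH.
rewrite [X in _ + X]tshift_eq0 // => [|m mn]; first by rewrite !addr0.
by rewrite mc_defect_tshiftDr // IH // add0r tshift_eq0 // => l lm; apply: IH; apply: ltn_trans lm mn.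
Qed.

End GaugeConjugation.

Variable T : V -> g.

Definition gauge_conj_series y k (S : nat -> V -> g) : nat -> V -> g :=
  step_rec k (fun m w => gauge k (br y) (fun l => S l w) m)
             (fun m S'_prev w => gauge k (br y) (fun l => S l w) m - S'_prev (rho y w)).

Section ConjugatedSeries.
Variables (y : g) (k : nat) (S : nat -> V -> g).
Hypothesis k_gt0 : (0 < k)%N.
Local Notation S' := (gauge_conj_series y k S).

Lemma gauge_conj_seriesE m w :
  S' m w = gauge k (br y) (fun l => S l w) m - tshift k (fun l => S' l (rho y w)) m.
Proof. by rewrite /gauge_conj_series step_recE // /tshift; case: ifP; rewrite ?subr0. Qed.

Lemma gauge_conj_seriesP : gauge_conj y k S S'.
Proof. by move=> m w; rewrite gauge_conj_seriesE subrK. Qed.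

Lemma gauge_conj_series_small m : (m < k)%N -> S' m =1 S m.
Proof. by move=> mk w; rewrite gauge_conj_seriesE tshift_small // subr0 gauge_small. Qed.

Lemma gauge_conj_series_lin : (forall i, is_lin (S i)) -> forall m, is_lin (S' m).
Proof.
move=> S_lin; elim/ltn_ind => m IH; rewrite /gauge_conj_series step_recE //.
case: leqP => km; last by apply: lin_gauge => //; case: Lie_br.
apply: lin_sub; first by apply: lin_gauge => //; case: Lie_br.
by apply: lin_comp; [apply: IH; lia | case: rep_rho].
Qed.

Lemma gauge_conj_series_coboundary :
  S 0%N =1 T -> S k =1 dbar br rho T y -> S' k =1 (fun _ => 0).
Proof.
move=> S0 Sk w; rewrite gauge_conj_seriesE /gauge /tshift leqnn subnn.
rewrite gauge_conj_series_small // !S0 Sk /dbar (br_anti (T w)).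
by rewrite addrAC addrK addNr.
Qed.

Lemma gauge_conj_series_deformation :
  (forall a b, br (br y a) (br y b) = 0) -> (forall a v, rho (br y a) (rho y v) = 0) ->
  is_deformation br rho T S -> is_deformation br rho T S'.
Proof.
move=> Ny_br Ny_rho [S0 S_lin S_eq].
have S'_lin := gauge_conj_series_lin S_lin.
split=> [u||]; first by rewrite gauge_conj_series_small.
  exact: S'_lin.
apply/(deformation_mc_defect S'_lin).
apply: (gauge_conj_mc_defect0 k_gt0) => //; first exact: gauge_conj_seriesP.
exact/(deformation_mc_defect S_lin).
Qed.

End ConjugatedSeries.

Lemma lowest_coef_cocycle S k : is_deformation br rho T S -> (0 < k)%N ->
  (forall j, (0 < j < k)%N -> S j =1 (fun _ => 0)) -> Z1 br rho T (S k).
Proof.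
move=> [S0 S_lin S_eq] k_gt0 S_low; split=> // u v.
have : conv (fun i j => br (S i u) (S j v)) k
       = conv (fun i j => S i (rho (S j u) v - rho (S j v) u)) k := S_eq k u v.
rewrite !conv_ends //; try by move=> i j /S_low ->; rewrite ?br0l.
rewrite !S0 (br_anti (S k u)) => ->.
by rewrite (addrC (T _)) addrK subrr.
Qed.

Hypothesis Z1_coboundary :
  forall f, Z1 br rho T f -> exists2 x, Nij br rho T x & f =1 dbar br rho T x.

Definition nij_primitive (f : V -> g) y := Nij br rho T y /\ f =1 dbar br rho T y.

Definition pick_nij (f : V -> g) : g := epsilon (inhabits 0) (nij_primitive f).

Lemma pick_nijP f : Z1 br rho T f -> nij_primitive f (pick_nij f).
Proof. by case/Z1_coboundary => x Nx fx; apply: (epsilon_spec _ (nij_primitive f)); exists x. Qed.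

Record frame := Frame {
  fphi : nat -> g -> g;
  fvphi : nat -> V -> V;
  fdef : nat -> V -> g }.

Definition gauge_step k (s : frame) : frame :=
  let y := pick_nij (fdef s k) in
  Frame (fun n z => gauge k (br y) (fun m => fphi s m z) n)
        (fun n w => gauge k (rho y) (fun m => fvphi s m w) n)
        (gauge_conj_series y k (fdef s)).

Section Rigidity.
Variable tau : nat -> V -> g.
Hypothesis tau_def : is_deformation br rho T tau.

Record frame_inv k s : Prop := FrameInv {
  fphi_lin : forall i, is_lin (fphi s i);
  fvphi_lin : forall i, is_lin (fvphi s i);
  fphi_br : forall n a b,
    conv (fun i j => br (fphi s i a) (fphi s j b)) n = fphi s n (br a b);
  fvphi_rho : forall n a u,
    fvphi s n (rho a u) = conv (fun i j => rho (fphi s i a) (fvphi s j u)) n;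
  fdef_transport : forall n u,
    conv (fun i j => fdef s i (fvphi s j u)) n = conv (fun i j => fphi s i (tau j u)) n;
  fdef_deformation : is_deformation br rho T (fdef s);
  fdef_low : forall j, (0 < j < k)%N -> fdef s j =1 (fun _ => 0) }.

Definition init_frame := Frame (fun n z => cseries z n) (fun n w => cseries w n) tau.

Fixpoint frame_at k : frame := if k is k'.+1 then gauge_step k (frame_at k') else init_frame.

Lemma frame_inv_init : frame_inv 1 init_frame.
Proof.
have [_ tau_lin _] := tau_def.
split=> //=.
- by move=> i a u v; rewrite /cseries; case: eqP; rewrite ?scaler0 ?addr0.
- by move=> i a u v; rewrite /cseries; case: eqP; rewrite ?scaler0 ?addr0.
- move=> n a b; rewrite -(conv_unitl (fun j => cseries (br a b) j)); apply: eq_conv => i j _ _.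
  by rewrite /cseries; case: eqP; case: eqP; rewrite ?br0l ?br0r.
- move=> n a u; rewrite -(conv_unitl (fun j => cseries (rho a u) j)); apply: eq_conv => i j _ _.
  by rewrite /cseries; case: eqP; case: eqP; rewrite ?rho0l ?rho0r.
- move=> n u; rewrite (conv_unitl (fun j => tau j u)) -(conv_unitr (fun i => tau i u)).
  by apply: eq_conv => i j _ _; rewrite /cseries; case: eqP; rewrite ?lin0.
- by move=> [|[]].
Qed.

Lemma frame_inv_step k s : (0 < k)%N -> frame_inv k s -> frame_inv k.+1 (gauge_step k s).
Proof.
move=> k_gt0 [phi_lin vphi_lin phi_br vphi_rho transport S_def S_low].
set S := fdef s; set y := pick_nij (S k).
have [[Ny_br Ny_rho _] Sk] : nij_primitive (S k) y.
  exact/pick_nijP/(lowest_coef_cocycle S_def k_gt0 S_low).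
have [S0 S_lin _] := S_def.
have br_lin : is_lin (br y) by case: Lie_br.
have rho_lin : is_lin (rho y) by case: rep_rho.
split=> /=.
- by move=> i; apply: lin_gauge.
- by move=> i; apply: lin_gauge.
- by move=> n a b; rewrite conv_br_gauge //; apply: eq_gauge => m.
- by move=> n a u; rewrite conv_rho_gauge //; apply: eq_gauge => m.
- move=> n u; rewrite (conv_gaugel _ (brDr y)) -/(sapp _ _ n).
  rewrite (sapp_gauge_conj (gauge_conj_series_lin y k_gt0 S_lin) (gauge_conj_seriesP y S k_gt0)).
  by apply: eq_gauge => m; apply: transport.
- exact: gauge_conj_series_deformation.
- move=> j /andP[j_gt0]; rewrite ltnS leq_eqVlt => /orP[/eqP->|jk] u.
    exact: gauge_conj_series_coboundary.
  by rewrite gauge_conj_series_small // S_low ?j_gt0.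
Qed.

Lemma frame_at_inv k : frame_inv k.+1 (frame_at k).
Proof. by elim: k => [|k IH]; [exact: frame_inv_init | exact: frame_inv_step]. Qed.

Lemma frame_at_stable n m : (n <= m)%N ->
  fphi (frame_at m) n =1 fphi (frame_at n) n /\ fvphi (frame_at m) n =1 fvphi (frame_at n) n.
Proof.
elim: m => [|m IH]; first by rewrite leqn0 => /eqP ->.
rewrite leq_eqVlt ltnS => /orP[/eqP -> // | nm]; have [IHphi IHvphi] := IH nm.
by split=> z /=; rewrite gauge_small ?ltnS // (IHphi, IHvphi).
Qed.

Lemma frame_at_transport n u :
  T (fvphi (frame_at n) n u) = conv (fun i j => fphi (frame_at n) i (tau j u)) n.
Proof.
have [_ _ _ _ transport [S0 _ _] S_low] := frame_at_inv n.
rewrite -transport /conv big_ord_recl big1 ?addr0 ?S0 ?subn0 // => i _.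
by rewrite S_low //= /bump /=; have := ltn_ord i; lia.
Qed.

Lemma deformation_trivial : trivial_deformation br rho T tau.
Proof.
(* Degree n of the equivalence is read off frame_at n, after which it never changes. *)
pose phi n := fphi (frame_at n) n; pose vphi n := fvphi (frame_at n) n.
have phiE n i : (i <= n)%N -> phi i =1 fphi (frame_at n) i.
  by move=> i_le_n z; rewrite (frame_at_stable i_le_n).1.
have vphiE n i : (i <= n)%N -> vphi i =1 fvphi (frame_at n) i.
  by move=> i_le_n w; rewrite (frame_at_stable i_le_n).2.
exists (pick_nij (tau 1%N)), phi, vphi; split.
- by split=> z; rewrite /phi /= /gauge /tshift /= ?add0r.
- split; first by split=> w; rewrite /vphi /= /gauge /tshift /= ?add0r.
  by split=> i; [exact: fphi_lin (frame_at_inv i) i | exact: fvphi_lin (frame_at_inv i) i].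
- move=> n a b; rewrite (phiE n n) // -(fphi_br (frame_at_inv n)).
  apply: (@eq_conv _ (fun i j => br (phi i a) (phi j b))) => i j i_le_n j_le_n.
  by rewrite (phiE n i) // (phiE n j).
- move=> n u; rewrite big_ord_recl big1 => [|i _]; last by [].
  rewrite /= addr0 subn0 (vphiE n n) // frame_at_transport.
  apply: (@eq_conv _ _ (fun i j => phi i (tau j u))) => i j i_le_n _.
  by rewrite (phiE n i).
- move=> n a u; rewrite (vphiE n n) // (fvphi_rho (frame_at_inv n)).
  apply: (@eq_conv _ _ (fun i j => rho (phi i a) (vphi j u))) => i j i_le_n j_le_n.
  by rewrite (phiE n i) // (vphiE n j).
Qed.

End Rigidity.
End LieRepresentation.

Theorem proposition5p9 (K : fieldType) (g V : lmodType K)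
    (br : g -> g -> g) (rho : g -> V -> V) (T : V -> g) :
  is_LieAlg br -> is_rep br rho -> is_Ooperator br rho T ->
  (forall f : V -> g,
     Z1 br rho T f <-> exists2 x : g, Nij br rho T x & f =1 dbar br rho T x) ->
  rigid br rho T.
Proof.
move=> Lie_br rep_rho _ Z1_iff tau tau_def.
exact: (deformation_trivial Lie_br rep_rho (fun f => (Z1_iff f).1) tau_def).
Qed.
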